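(* For every sufficiently small $\eta>0$ there exists $\nu_0>0$ such that for every $\nu\in(0,\nu_0]$ there exists $\alpha_0>0$ such that for every $\alpha\in(0,\alpha_0]$ there exists $n_0$ such that for all $n\ge n_0$: if $G$ is an $(\alpha,\eta,\nu)$-superextremal biclique on $n$ vertices with partition $V(G)=A\uplus B$ and $M$ is a matching in $G[B]$ with exactly $|B|-|A|$ edges, then $G$ has a Hamilton cycle containing all edges of $M$.
   Context: $d(v,X)$ is the number of neighbours of $v$ in $X$. A graph $G$ on $n$ vertices is an $(\alpha,\varepsilon,\nu)$-superextremal biclique if there is a partition $V(G)=A\uplus B$ with: (B1) $0\le |B|-|A|\le\alpha n$; (B2) $d(a,B)\ge(1/2-\varepsilon)n$ for all but at most $\alpha n$ vertices $a\in A$; (B3) $d(a,B)\ge\nu n$ for all $a\in A$; (B4) $d(b,A)\ge(1/2-\varepsilon)n$ for all but at most $\alpha n$ vertices $b\in B$; (B5) $d(b,A)\ge(1/4-\varepsilon)n$ for all $b\in B$; (B6) if $|A|\ne\lfloor n/2\rfloor$, then $d(b,B)\le 2\nu n$ for all $b\in B$. (Here it is applied with $\varepsilon=\eta$.) *)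

From HB Require Import structures.
From mathcomp Require Import all_boot all_order all_algebra.
Set Implicit Arguments. Unset Strict Implicit. Unset Printing Implicit Defensive.
Import Order.TTheory GRing.Theory Num.Theory.

(* A simple graph on vertex set 'I_n is a symmetric irreflexive relation G. *)

Definition deg (n : nat) (G : rel 'I_n) (v : 'I_n) (X : {set 'I_n}) : nat :=
  #|[set u in X | G v u]|.

Local Open Scope ring_scope.

Definition superextremal (R : archiRealFieldType) (n : nat) (G : rel 'I_n)
  (A B : {set 'I_n}) (alpha eps nu : R) : Prop :=
  [/\ A :&: B = set0 /\ A :|: B = setT,
      ((#|A| <= #|B|)%N /\ (#|B| - #|A|)%:R <= alpha * n%:R),
      #|[set a in A | (deg G a B)%:R < (2^-1 - eps) * n%:R]|%:R <= alpha * n%:R /\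
      (forall a, a \in A -> nu * n%:R <= (deg G a B)%:R),
      #|[set b in B | (deg G b A)%:R < (2^-1 - eps) * n%:R]|%:R <= alpha * n%:R /\
      (forall b, b \in B -> (4^-1 - eps) * n%:R <= (deg G b A)%:R) &
      (#|A| != n./2 -> forall b, b \in B -> (deg G b B)%:R <= 2 * nu * n%:R)].

Definition matching_in (n : nat) (G : rel 'I_n) (B : {set 'I_n})
  (M : {set {set 'I_n}}) : Prop :=
  (forall e, e \in M -> exists u v, [/\ e = [set u; v], u != v, G u v,
                                        u \in B & v \in B]) /\
  (forall e f, e \in M -> f \in M -> e != f -> [disjoint e & f]).

Definition hamilton_cycle (n : nat) (G : rel 'I_n) (c : seq 'I_n) : Prop :=
  [/\ (3 <= n)%N, uniq c, size c = n & cycle G c].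

Definition edge_of_cycle (n : nat) (c : seq 'I_n) (e : {set 'I_n}) : Prop :=
  exists u v, e = [set u; v] /\ u \in c /\ next c u = v.

From mathcomp Require Import all_boot all_order all_algebra.
From mathcomp Require Import zify lra.
Set Implicit Arguments. Unset Strict Implicit. Unset Printing Implicit Defensive.
Import Order.TTheory GRing.Theory Num.Theory.

(* Each edge of M behaves like a single vertex of B, and |M| = |B| - |A| makes
   the resulting bipartite graph balanced.  In the complete such graph (all
   A-B pairs plus M) a Hamilton cycle through M is written down directly.
   Bipartite Bondy-Chvatal closure: if a in A and b in B satisfy
   d(a,B) + d(b,A) > |B|, then a Hamilton cycle through M using the new edge
   ab yields one avoiding it, since on the Hamilton path from a to b some
   neighbour z of b is followed by a neighbour w of a.  The superextremal
   degree bounds let us add all A-B pairs to G in four rounds (typical A x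
   typical B, A x typical B, typical A x B, A x B), where typical vertices
   have degree at least (1/2 - eta)n, keeping the degree condition each time. *)

Section Consecutive.

Variable T : eqType.
Implicit Types (s : seq T) (x y : T).

Definition consec s x y := exists q1 q2, s = q1 ++ x :: y :: q2.

Lemma consec_catl s1 s2 x y : consec s1 x y -> consec (s1 ++ s2) x y.
Proof. by case=> q1 [q2 ->]; exists q1, (q2 ++ s2); rewrite -catA. Qed.

Lemma consec_catr s1 s2 x y : consec s2 x y -> consec (s1 ++ s2) x y.
Proof. by case=> q1 [q2 ->]; exists (s1 ++ q1), q2; rewrite catA. Qed.

Lemma consec_rev s x y : consec s x y -> consec (rev s) y x.
Proof.
case=> q1 [q2 ->]; exists (rev q2), (rev q1).
by rewrite rev_cat !rev_cons -!cats1 -!catA.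
Qed.

Lemma consec_catP s1 s2 x y :
  consec (s1 ++ s2) x y ->
  [\/ consec s1 x y, consec s2 x y |
      exists s1' s2', s1 = rcons s1' x /\ s2 = y :: s2'].
Proof.
elim: s1 => [|z s1 IH] /=; first by move=> h; apply: Or32.
move=> [[|z' q1] [q2]] /= [Ez E].
  subst; case: s1 IH E => [|y' s1'] IH /= E.
    by rewrite E; apply: Or33; exists [::], q2.
  by case: E => <- _; apply: Or31; exists [::], s1'.
have /IH : consec (s1 ++ s2) x y by exists q1, q2.
case=> [[r1 [r2 ->]]|h|[s1' [s2' [-> ->]]]].
- by apply: Or31; exists (z :: r1), r2.
- by apply: Or32.
- by apply: Or33; exists (z :: s1'), s2'.
Qed.

Lemma consec_next s x y : uniq s -> consec s x y -> next s x = y.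
Proof.
move=> Us [q1 [q2 E]].
by rewrite -(next_rot (size q1) Us) E rot_size_cat /= eqxx.
Qed.

Lemma consec_rot s i x y :
  consec s x y -> y != head y (rot i s) -> consec (rot i s) x y.
Proof.
rewrite -{1}(cat_take_drop i s) /rot => /consec_catP[h|h|[s1' [s2' [_ E]]]] ne.
- exact: consec_catr.
- exact: consec_catl.
- by rewrite E /= eqxx in ne.
Qed.

Lemma consec_mem s x y : consec s x y -> x \in s.
Proof. by case=> q1 [q2 ->]; rewrite mem_cat inE eqxx orbT. Qed.

Lemma rot_index_last s a b : uniq s -> next s b = a -> b \in s ->
  exists t, rot (index a s) s = a :: t /\ last a t = b.
Proof.
move=> Us nb bs; have as_ : a \in s by rewrite -nb mem_next.
have E := rot_index as_; set t := _ ++ _ in E; exists t; split=> //.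
have Ut : uniq (a :: t) by rewrite -E rot_uniq.
have : prev (a :: t) (next (a :: t) b) = b by rewrite prev_next.
rewrite -E (next_rot _ Us) nb E prev_nth mem_head (memNindex (x := a) (s := t)).
  by rewrite -last_nth.
by case/andP: Ut.
Qed.

Lemma path_crossing (H : rel T) (inA NA NB : pred T) x t :
  (forall u v, NB u -> inA v -> ~~ H u v) ->
  (forall v, NA v -> ~~ inA v) ->
  path H x t ->
  count (predC inA) t < count NA t + count NB (belast x t) ->
  exists z w, consec (x :: t) z w /\ NB z && NA w.
Proof.
move=> noBA hNA; elim: t x => [|y t IH] x //= /andP[Hxy Ht] hc.
have [nxy|nxy] := boolP (NB x && NA y); first by exists x, y; split=> //; exists [::], t.
have step : NA y + NB x <= ~~ inA y.
  case Ay: (inA y) => /=.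
    case NAy: (NA y); first by move: (hNA _ NAy); rewrite Ay.
    by case NBx: (NB x) => //; move: (noBA _ _ NBx Ay); rewrite Hxy.
  by move: nxy; case: (NB x); case: (NA y).
have [|z [w [hzw hNzw]]] := IH y Ht.
  by move: hc; rewrite -addnA (addnCA (count NA t)) addnA; lia.
by exists z, w; split=> //; apply: (consec_catr [:: x]).
Qed.

(* Posa rotation: drop the step [zw], reverse the tail [w :: q2] and close up. *)
Lemma cycle_crossing (H : rel T) q1 q2 z w :
  symmetric H -> sorted H (q1 ++ z :: w :: q2) ->
  H (head z q1) w -> H (last w q2) z ->
  cycle H (q1 ++ z :: rev (w :: q2)).
Proof.
move=> Hsym P Haw Hbz.
have Pq : path H w q2.
  move: P; case: q1 {Haw} => [|y q1] /=; first by case/andP.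
  by rewrite cat_path /= => /and3P[_ _ /andP[]].
have Prev : path H z (rev (w :: q2)).
  rewrite lastI rev_rcons /= Hsym Hbz rev_path.
  by rewrite (eq_path (e' := H)) // => u v; rewrite Hsym.
rewrite (cycle_path w) last_cat /= rev_cons last_rcons.
case: q1 P Haw => [|y q1] /= P Haw; first by rewrite Hsym Haw -rev_cons.
move: P; rewrite cat_path /= => /and3P[P1 P2 _].
by rewrite Hsym Haw /= cat_path P1 /= P2 -rev_cons Prev.
Qed.

End Consecutive.

Section PathEdges.

Variable T : finType.
Implicit Types (s : seq T) (e : {set T}).

Definition path_edge s e := exists x y, e = [set x; y] /\ consec s x y.

Lemma path_edge_rev s e : path_edge s e -> path_edge (rev s) e.
Proof. by case=> x [y [-> h]]; exists y, x; rewrite setUC; split=> //; apply: consec_rev. Qed.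

Lemma eq_set2 (x y u v : T) :
  u != v -> [set x; y] = [set u; v] -> (x = u /\ y = v) \/ (x = v /\ y = u).
Proof.
move=> uv E.
have : u \in [set x; y] by rewrite E !inE eqxx.
have : v \in [set x; y] by rewrite E !inE eqxx orbT.
rewrite !inE => /orP[/eqP h1|/eqP h1] /orP[/eqP h2|/eqP h2]; subst.
- by rewrite eqxx in uv.
- by right.
- by left.
- by rewrite eqxx in uv.
Qed.

End PathEdges.

Section FullSeq.

Variables (n : nat) (s : seq 'I_n).
Hypotheses (Us : uniq s) (Ss : size s = n).

Lemma mem_full_seq x : x \in s.
Proof.
have : #|s| = #|'I_n| by rewrite card_ord (card_uniqP Us).
by move=> /subset_cardP /(_ (subset_predT _)) ->.
Qed.

Lemma count_full_seq (P : pred 'I_n) : count P s = #|P|.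
Proof.
have ss : s =i enum 'I_n by move=> x; rewrite mem_enum mem_full_seq.
rewrite ((permP (uniq_perm Us (enum_uniq _) ss)) P) cardE /enum_mem size_filter.
by rewrite (eq_filter (a2 := predT)) // filter_predT.
Qed.

End FullSeq.

Section Interleave.

Variable T : Type.

Fixpoint interleave (la : seq T) (lm : seq (T * T)) (ls : seq T) : seq T :=
  match la, lm, ls with
  | a :: la', (u, v) :: lm', _ => a :: u :: v :: interleave la' lm' ls
  | a :: la', [::], s :: ls' => a :: s :: interleave la' [::] ls'
  | a :: _, [::], [::] => [:: a]
  | [::], _, _ => [::]
  end.

Definition flat (lm : seq (T * T)) := flatten [seq [:: p.1; p.2] | p <- lm].

Lemma size_flat lm : size (flat lm) = (2 * size lm)%N.
Proof. by elim: lm => //= p lm IH; rewrite IH; lia. Qed.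

End Interleave.

Section InterleaveEq.

Variable T : eqType.
Implicit Types (la ls : seq T) (lm : seq (T * T)).

Lemma perm_interleave la lm ls :
  size la = (size lm + size ls)%N ->
  perm_eq (interleave la lm ls) (la ++ flat lm ++ ls).
Proof.
move=> hs; apply/permP => P; rewrite !count_cat.
elim: la lm ls hs => [|a la IH] [|[u v] lm] [|s ls] //= [hs];
  rewrite IH //= /flat /=; lia.
Qed.

Lemma path_interleave (K : rel T) (inA inB : pred T) la lm ls :
  (forall a b, inA a -> inB b -> K a b && K b a) ->
  (forall p, p \in lm -> [&& K p.1 p.2, inB p.1 & inB p.2]) ->
  all inA la -> all inB ls -> size la = (size lm + size ls)%N ->
  forall x, inB x -> path K x (interleave la lm ls) && inB (last x (interleave la lm ls)).
Proof.
move=> hK; elim: la lm ls => [|a la IH] lm ls hlm //= /andP[aA hla] hls hs x xB.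
case: lm hlm hs => [|[u v] lm] hlm /= hs.
  case: ls hls hs => [|s ls] //= /andP[sB hls] [hs].
  by rewrite (andP (hK a x aA xB)).2 (andP (hK a s aA sB)).1; apply: IH.
have /and3P[Kuv uB vB] := hlm (u, v) (mem_head _ _).
rewrite (andP (hK a x aA xB)).2 (andP (hK a u aA uB)).1 Kuv /=.
by apply: IH => // [p pl|]; [apply: hlm; rewrite inE pl orbT|case: hs].
Qed.

Lemma consec_interleave la lm ls u v :
  size la = (size lm + size ls)%N -> (u, v) \in lm -> consec (interleave la lm ls) u v.
Proof.
elim: la lm ls => [|a la IH] [|[u' v'] lm] ls //= [hs].
rewrite inE => /orP[/eqP[-> ->]|h]; first by exists [:: a], (interleave la lm ls).
exact: (consec_catr [:: a; u'; v'] (IH _ _ hs h)).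
Qed.

Lemma mem_flat lm x : (x \in flat lm) = has (fun p => (x == p.1) || (x == p.2)) lm.
Proof. by elim: lm => //= p lm IH; rewrite !inE IH orbA. Qed.

End InterleaveEq.

Section MatchingPairs.

Variable T : finType.
Variable M : {set {set T}}.
Hypothesis M2 : forall e, e \in M -> exists u v, e = [set u; v] /\ u != v.
Hypothesis Mdisj : forall e f, e \in M -> f \in M -> e != f -> [disjoint e & f].

Definition pair_of (e : {set T}) := [pick p : T * T | (e == [set p.1; p.2]) && (p.1 != p.2)].

Let lm := pmap pair_of (enum M).

Lemma pair_ofK : ocancel pair_of (fun p => [set p.1; p.2]).
Proof. by move=> e; rewrite /pair_of; case: pickP => // p /andP[/eqP ->]. Qed.

Lemma pair_ofP e p : pair_of e = Some p -> e = [set p.1; p.2] /\ p.1 != p.2.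
Proof. by rewrite /pair_of; case: pickP => // q /andP[/eqP Ee qq] [<-]. Qed.

Lemma pair_of_mem p : p \in lm -> exists2 e, e \in M & pair_of e = Some p.
Proof. by rewrite mem_pmap => /mapP[e]; rewrite mem_enum => eM ->; exists e. Qed.

Lemma pair_of_some e : e \in M -> exists p, pair_of e = Some p.
Proof.
move=> eM; have [u [v [Ee uv]]] := M2 eM.
rewrite /pair_of; case: pickP => [p _|/(_ (u, v))]; first by exists p.
by rewrite /= Ee eqxx uv.
Qed.

Lemma uniq_flat_pairs : uniq (flat lm).
Proof.
have : uniq lm by exact: (pmap_uniq pair_ofK (enum_uniq _)).
have : {subset lm <= lm} by [].
elim: {1 3 4}lm => //= p l IH sub /andP[pl Ul].
have subl : {subset l <= lm} by move=> q ql; apply: sub; rewrite inE ql orbT.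
have [e eM pe] := pair_of_mem (sub p (mem_head _ _)).
have [Ee pp] := pair_ofP pe.
have notin x : x \in [set p.1; p.2] -> x \notin flat l.
  move=> xe; rewrite mem_flat; apply/hasPn => q ql; apply: contraTN xe => xq.
  have [f fM fq] := pair_of_mem (subl q ql).
  have ef : e != f by apply: contraNneq pl => ef; move: fq; rewrite -ef pe => -[->].
  by rewrite -Ee (disjointFl (Mdisj eM fM ef)) // (pair_ofP fq).1 !inE.
by rewrite inE negb_or pp !notin ?IH ?set21 ?set22.
Qed.

Lemma matching_pairs : exists lm : seq (T * T),
  [/\ size lm = #|M|, uniq (flat lm),
      forall p, p \in lm -> [set p.1; p.2] \in M &
      forall e, e \in M -> exists2 p, p \in lm & e = [set p.1; p.2]].
Proof.
exists lm; split.
- rewrite size_pmap cardE -count_predT; apply: eq_in_count => e.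
  by rewrite mem_enum => /pair_of_some[p ->].
- exact: uniq_flat_pairs.
- by move=> p /pair_of_mem[e eM /pair_ofP[<- _]].
- move=> e eM; have [p pe] := pair_of_some eM; exists p; last exact: (pair_ofP pe).1.
  by rewrite mem_pmap; apply/mapP; exists e; rewrite ?mem_enum.
Qed.

End MatchingPairs.

Section Closure.

Variables (n : nat) (A B : {set 'I_n}) (M : {set {set 'I_n}}).
Hypothesis memB : forall x, (x \in B) = (x \notin A).
Hypothesis M_subB : forall e, e \in M -> {subset e <= B}.
Implicit Types (H : rel 'I_n) (a b : 'I_n) (s t : seq 'I_n) (SA SB X : {set 'I_n}).

Definition ham_through H := exists s,
  [/\ uniq s, size s = n, cycle H s & forall e, e \in M -> path_edge s e].

Lemma ham_through_sub H H' : subrel H H' -> ham_through H -> ham_through H'.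
Proof. by move=> sub [s [Us Ss Cs Ms]]; exists s; split=> //; apply: sub_cycle Cs. Qed.

Definition add_edges H (l : seq ('I_n * 'I_n)) : rel 'I_n :=
  fun x y => [|| H x y, (x, y) \in l | (y, x) \in l].

Lemma add_edges_sym H l : symmetric H -> symmetric (add_edges H l).
Proof. by move=> Hsym x y; rewrite /add_edges Hsym [X in _ || X]orbC. Qed.

Lemma add_edges_cons H p l : add_edges H (p :: l) =2 add_edges (add_edges H l) [:: p].
Proof.
move=> x y; rewrite /add_edges !inE.
by case: (H x y); case: ((x, y) == p); case: ((y, x) == p);
  case: ((x, y) \in l); case: ((y, x) \in l).
Qed.

Lemma deg_mono H H' v X : subrel H H' -> (deg H v X <= deg H' v X)%N.
Proof.
by move=> sub; apply/subset_leq_card/subsetP => u; rewrite !inE => /andP[-> /sub].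
Qed.

Lemma path_edge_notA s e x : e \in M -> path_edge s e -> x \in A ->
  exists y z, e = [set y; z] /\ [/\ consec s y z, y != x & z != x].
Proof.
move=> eM [y [z [Ee hyz]]] xA; exists y, z; split=> //.
by split=> //; apply: contraTneq xA => <-; rewrite -memB (M_subB eM) // Ee !inE eqxx ?orbT.
Qed.

Definition no_edge_in_A H := {in A &, forall x y, ~~ H x y}.

Section OneEdge.

Variable H : rel 'I_n.
Hypothesis Hsym : symmetric H.
Hypothesis noAA : no_edge_in_A H.

Lemma crossing_pair a t : a \in A -> last a t \in B ->
  uniq (a :: t) -> size (a :: t) = n -> path H a t ->
  (#|B| < deg H a B + deg H (last a t) A)%N ->
  exists z w, consec (a :: t) z w /\ [&& H (last a t) z, z \in A & H a w].
Proof.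
move=> aA bB Ut St Pt hdeg; set b := last a t in bB hdeg.
set NA := [pred v | H a v && (v \in B)]; set NB := [pred u | H b u && (u \in A)].
have countNA : count NA t = deg H a B.
  have := count_full_seq Ut St NA; rewrite /= memB aA andbF add0n => ->.
  by apply: eq_card => x; rewrite !inE andbC.
have countNB : count NB (belast a t) = deg H b A.
  have := count_full_seq Ut St NB.
  have bA : b \notin A by rewrite -memB.
  rewrite lastI -cats1 count_cat /= -/b (negbTE bA) andbF !addn0 => ->.
  by apply: eq_card => x; rewrite !inE andbC.
have countB : count (predC [in A]) t = #|B|.
  have := count_full_seq Ut St (predC [in A]); rewrite /= aA add0n => ->.
  by apply: eq_card => x; rewrite !inE memB.
have noBA u v : NB u -> v \in A -> ~~ H u v by move=> /andP[_ uA] vA; apply: noAA.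
have NAnotA v : NA v -> v \notin A by move=> /andP[_]; rewrite memB.
have [|z [w [hzw /andP[NBz NAw]]]] := path_crossing noBA NAnotA Pt.
  by rewrite countNA countNB countB.
by move: NBz NAw => /andP[Hbz zA] /andP[Haw _]; exists z, w; rewrite Hbz zA Haw.
Qed.

Lemma ham_through_of_path a t : a \in A -> last a t \in B ->
  uniq (a :: t) -> size (a :: t) = n -> path H a t ->
  (forall e, e \in M -> path_edge (a :: t) e) ->
  (#|B| < deg H a B + deg H (last a t) A)%N -> ham_through H.
Proof.
move=> aA bB Ut St Pt Mt hdeg.
have [z [w [[q1 [q2 E]] /and3P[Hbz zA Haw]]]] := crossing_pair aA bB Ut St Pt hdeg.
have pe : perm_eq (q1 ++ z :: rev (w :: q2)) (a :: t).
  by rewrite E perm_cat2l perm_cons perm_rev.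
exists (q1 ++ z :: rev (w :: q2)); split.
- by rewrite (perm_uniq pe).
- by rewrite (perm_size pe).
- have head_a : head z q1 = a by case: q1 E {pe} => [|y q1] [->].
  have last_b : last w q2 = last a t by rewrite -[RHS]/(last a (a :: t)) E last_cat.
  by apply: cycle_crossing; rewrite -?E ?head_a ?last_b.
move=> e eM; have [x [y [Ee [hxy xz _]]]] := path_edge_notA eM (Mt e eM) zA.
rewrite E -cat_rcons in hxy; rewrite -cat_rcons.
case: (consec_catP hxy) => [h|h|[s1 [s2 [/rcons_inj[_ zx] _]]]].
- by exists x, y; split=> //; apply: consec_catl.
- by exists y, x; rewrite Ee setUC; split=> //; apply/consec_catr/consec_rev.
- by rewrite zx eqxx in xz.
Qed.

Lemma add_edge1E a b x y :
  add_edges H [:: (a, b)] x y = [|| H x y, (x == a) && (y == b) | (y == a) && (x == b)].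
Proof. by rewrite /add_edges !inE !xpair_eqE. Qed.

(* Rotating [s] to start at [a] turns the step [b -> a] into the closing step;
   no step of the resulting path [a :: t] can use the new edge. *)
Lemma path_of_cycle_add_edge a b s : (2 < n)%N -> a \in A -> b \in B ->
  uniq s -> size s = n -> cycle (add_edges H [:: (a, b)]) s ->
  (forall e, e \in M -> path_edge s e) -> next s b = a ->
  exists t, [/\ uniq (a :: t), size (a :: t) = n, path H a t, last a t = b &
                forall e, e \in M -> path_edge (a :: t) e].
Proof.
move=> n_gt2 aA bB Us Ss Cs Ms nb.
have [t [E tb]] := rot_index_last Us nb (mem_full_seq Us Ss b).
have Ut : uniq (a :: t) by rewrite -E rot_uniq.
have St : size (a :: t) = n by rewrite -E size_rot.
exists t; split=> //; last first.
  move=> e eM; have [x [y [Ee [hxy _ ya]]]] := path_edge_notA eM (Ms e eM) aA.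
  by exists x, y; split=> //; rewrite -E; apply: consec_rot; rewrite // E.
have ab : a != b by apply: contraTneq bB => <-; rewrite memB aA.
case/lastP: t tb Ut St E => [/= ba|t' b']; first by rewrite ba eqxx in ab.
rewrite last_rcons => eqb Ut St E; subst b'.
move: Cs; rewrite -(rot_cycle (index a s)) E /= !rcons_path.
case/andP=> /andP[Pt' Hlast] _; clear E.
have [bt' Ut'] : b \notin t' /\ uniq (a :: t').
  by move: Ut; rewrite /= mem_rcons rcons_uniq inE negb_or => /andP[/andP[_ ->] /andP[->]].
rewrite (sub_in_path (P := [pred v | v != b]) _ _ Pt') /=.
- case: t' {Pt' Ut} bt' Ut' St Hlast => [|y t'] bt' Ut' St; first by rewrite -St in n_gt2.
  rewrite add_edge1E /= => /or3P[// | /andP[/eqP la _] | /andP[_ /eqP lb]].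
    by move: Ut' => /andP[+ _]; rewrite -la mem_last.
  by move: bt'; rewrite -lb mem_last.
- by move=> x y /= xb yb; rewrite add_edge1E (negbTE xb) (negbTE yb) !andbF !orbF.
- by rewrite /= ab; apply/allP => x; apply: contraTneq => ->.
Qed.

Lemma ham_through_add_edge a b : (2 < n)%N -> a \in A -> b \in B ->
  (#|B| < deg H a B + deg H b A)%N ->
  ham_through (add_edges H [:: (a, b)]) -> ham_through H.
Proof.
move=> n_gt2 aA bB hdeg [s [Us Ss Cs Ms]].
have [allH|] := boolP [forall x, (x \in s) ==> H x (next s x)].
  exists s; split=> //; apply: cycle_from_next => // x xs.
  by have := forallP allH x; rewrite xs.
case/forallPn => x; rewrite negb_imply => /andP[xs nH].
have [s' [Us' Ss' Cs' Ms' nb]] : exists s', [/\ uniq s', size s' = n,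
    cycle (add_edges H [:: (a, b)]) s', forall e, e \in M -> path_edge s' e &
    next s' b = a].
  move: (next_cycle Cs xs); rewrite add_edge1E (negbTE nH) /=.
  case/orP=> /andP[/eqP xa /eqP nx]; subst x; last by exists s.
  exists (rev s); split; rewrite ?rev_uniq ?size_rev //.
  - rewrite rev_cycle (eq_cycle (e' := add_edges H [:: (a, b)])) // => u v.
    exact: add_edges_sym.
  - by move=> e /Ms /path_edge_rev.
  - by rewrite (next_rev Us) -nx prev_next.
have [t [Ut St Pt tb Mt]] := path_of_cycle_add_edge n_gt2 aA bB Us' Ss' Cs' Ms' nb.
by apply: (ham_through_of_path aA _ Ut St Pt Mt); rewrite tb.
Qed.

End OneEdge.

Lemma no_edge_in_A_add_edges H l : no_edge_in_A H ->
  (forall p, p \in l -> p.2 \in B) -> no_edge_in_A (add_edges H l).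
Proof.
move=> noAA lB x y xA yA; rewrite /add_edges (negbTE (noAA x y xA yA)) /=.
by apply/norP; split; apply/negP => /lB /=; rewrite memB ?xA ?yA.
Qed.

Lemma ham_through_add_edges H l : (2 < n)%N -> symmetric H -> no_edge_in_A H ->
  (forall p, p \in l ->
     [/\ p.1 \in A, p.2 \in B & (#|B| < deg H p.1 B + deg H p.2 A)%N]) ->
  ham_through (add_edges H l) -> ham_through H.
Proof.
move=> n_gt2 Hsym noAA; elim: l => [_|[a b] l IH hl hH].
  by apply: ham_through_sub => x y; rewrite /add_edges !in_nil !orbF.
have [/= aA bB hdeg] := hl (a, b) (mem_head _ _).
have hl' q : q \in l -> [/\ q.1 \in A, q.2 \in B & (#|B| < deg H q.1 B + deg H q.2 A)%N].
  by move=> ql; apply: hl; rewrite inE ql orbT.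
have subl : subrel H (add_edges H l) by move=> x y; rewrite /add_edges => ->.
apply: IH => //; apply: (ham_through_add_edge (add_edges_sym _ Hsym) _ n_gt2 aA bB).
- by apply: (no_edge_in_A_add_edges noAA) => q /hl'[_ ->].
- by apply: leq_trans hdeg _; apply: leq_add; apply: deg_mono.
- by apply: ham_through_sub hH => x y; rewrite -add_edges_cons.
Qed.

Definition add_biclique H SA SB :=
  add_edges H [seq (x, y) | x <- enum SA, y <- enum SB].

Lemma add_bicliqueE H SA SB x y : add_biclique H SA SB x y =
  [|| H x y, (x \in SA) && (y \in SB) | (y \in SA) && (x \in SB)].
Proof.
have memp u v :
    ((u, v) \in [seq (x, y) | x <- enum SA, y <- enum SB]) = (u \in SA) && (v \in SB).
  apply/allpairsP/andP => [[[x' y'] /= [xS yS [-> ->]]]|[uS vS]].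
    by move: xS yS; rewrite !mem_enum => -> ->.
  by exists (u, v); rewrite !mem_enum.
by rewrite /add_biclique /add_edges !memp.
Qed.

Lemma add_biclique_sym H SA SB : symmetric H -> symmetric (add_biclique H SA SB).
Proof. exact: add_edges_sym. Qed.

Lemma no_edge_in_A_add_biclique H SA SB :
  no_edge_in_A H -> SB \subset B -> no_edge_in_A (add_biclique H SA SB).
Proof.
move=> noAA /subsetP sB x y xA yA.
have notSB z : z \in A -> z \notin SB by apply: contraTN => /sB; rewrite memB.
by rewrite add_bicliqueE (negbTE (noAA x y xA yA)) !(negbTE (notSB _ _)) ?andbF.
Qed.

Lemma add_biclique_sub H SA SB : subrel H (add_biclique H SA SB).
Proof. by move=> x y Hxy; rewrite add_bicliqueE Hxy. Qed.

Lemma deg_add_bicliquel H SA SB a X : a \in SA -> SB \subset X ->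
  (#|SB| <= deg (add_biclique H SA SB) a X)%N.
Proof.
move=> aSA /subsetP sX; apply/subset_leq_card/subsetP => u uSB.
by rewrite inE sX // add_bicliqueE aSA uSB orbT.
Qed.

Lemma deg_add_bicliquer H SA SB b X : b \in SB -> SA \subset X ->
  (#|SA| <= deg (add_biclique H SA SB) b X)%N.
Proof.
move=> bSB /subsetP sX; apply/subset_leq_card/subsetP => u uSA.
by rewrite inE sX // add_bicliqueE uSA bSB !orbT.
Qed.

Lemma ham_through_add_biclique H SA SB : (2 < n)%N ->
  symmetric H -> no_edge_in_A H -> SA \subset A -> SB \subset B ->
  {in SA & SB, forall a b, (#|B| < deg H a B + deg H b A)%N} ->
  ham_through (add_biclique H SA SB) -> ham_through H.
Proof.
move=> n_gt2 Hsym noAA /subsetP sA /subsetP sB hdeg.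
apply: ham_through_add_edges => // -[a b] /allpairsP[[x y] /= [xSA ySB [-> ->]]].
by rewrite !mem_enum in xSA ySB; rewrite sA ?sB ?hdeg.
Qed.

End Closure.

Section Complete.

Variables (n : nat) (A B : {set 'I_n}) (lm : seq ('I_n * 'I_n)).
Hypothesis memB : forall x, (x \in B) = (x \notin A).
Hypothesis flat_subB : {subset flat lm <= B}.
Hypothesis flat_uniq : uniq (flat lm).
Hypothesis size_lm : size lm = (#|B| - #|A|)%N.
Hypothesis leAB : (#|A| <= #|B|)%N.

Let la := enum A.
Let ls := [seq x <- enum B | x \notin flat lm].

Lemma cardAB : (#|A| + #|B| = n)%N.
Proof.
have e := cardsC A; rewrite card_ord in e; apply: etrans e.
by congr (_ + _); apply: eq_card => x; rewrite memB inE.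
Qed.

Lemma uniq_blocks : uniq (la ++ flat lm ++ ls).
Proof.
rewrite cat_uniq enum_uniq cat_uniq flat_uniq filter_uniq ?enum_uniq //=.
rewrite andbT; apply/andP; split.
  apply/hasPn => x; rewrite /la /ls mem_cat mem_enum mem_filter mem_enum -memB.
  by case/orP => [/flat_subB|/andP[_]].
by apply/hasPn => x; rewrite mem_filter => /andP[].
Qed.

Lemma size_blocks : size (la ++ flat lm ++ ls) = n.
Proof.
rewrite -(card_uniqP uniq_blocks) -[RHS]card_ord; apply: eq_card => x.
rewrite /la /ls !mem_cat mem_enum mem_filter mem_enum memB.
by case: (x \in A); case: (x \in flat lm).
Qed.

Lemma size_blocks_balanced : size la = (size lm + size ls)%N.
Proof.
have sizeA : size la = #|A| by rewrite cardE.
have := size_blocks; rewrite !size_cat size_flat sizeA => h.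
have : (#|A| + (2 * size lm + size ls) = #|A| + #|B|)%N by rewrite h cardAB.
by move: size_lm leAB; clear; lia.
Qed.

Lemma complete_cycle : (0 < n)%N -> exists s, [/\ uniq s, size s = n,
  cycle (fun x y => ((x \in A) != (y \in A)) || ((x, y) \in lm)) s &
  forall p, p \in lm -> consec s p.1 p.2].
Proof.
move=> n_gt0; have perm := perm_interleave size_blocks_balanced.
exists (interleave la lm ls); split.
- by rewrite (perm_uniq perm) uniq_blocks.
- by rewrite (perm_size perm) size_blocks.
- have [b bB] : exists b, b \in B by apply/card_gt0P; have := cardAB; lia.
  set K := fun x y => _.
  have KAB a b' : a \in A -> b' \in B -> K a b' && K b' a.
    by rewrite /K memB => -> /negbTE ->.
  have Klm p : p \in lm -> [&& K p.1 p.2, p.1 \in B & p.2 \in B].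
    move=> pl; rewrite /K -surjective_pairing pl orbT !flat_subB // mem_flat;
      by apply/hasP; exists p; rewrite ?eqxx ?orbT.
  have hla : all [in A] la by apply/allP => x; rewrite mem_enum.
  have hls : all [in B] ls by apply/allP => x; rewrite mem_filter mem_enum => /andP[].
  have /andP[_ lastB] := path_interleave KAB Klm hla hls size_blocks_balanced bB.
  have /andP[P _] := path_interleave KAB Klm hla hls size_blocks_balanced lastB.
  by rewrite (cycle_path b).
- by move=> p pl; apply: consec_interleave; rewrite ?size_blocks_balanced -?surjective_pairing.
Qed.

End Complete.

Lemma ham_through_complete n (A B : {set 'I_n}) (M : {set {set 'I_n}}) :
  (forall x, (x \in B) = (x \notin A)) -> (forall e, e \in M -> {subset e <= B}) ->
  (forall e, e \in M -> exists u v, e = [set u; v] /\ u != v) ->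
  (forall e f, e \in M -> f \in M -> e != f -> [disjoint e & f]) ->
  (0 < n)%N -> (#|A| <= #|B|)%N -> #|M| = (#|B| - #|A|)%N ->
  ham_through M (fun x y => ((x \in A) != (y \in A)) || ([set x; y] \in M)).
Proof.
move=> memB M_subB M2 Mdisj n_gt0 leAB cardM.
have [lm [size_lm Ul lmM Mlm]] := matching_pairs M2 Mdisj.
have flatB : {subset flat lm <= B}.
  move=> x; rewrite mem_flat => /hasP[p pl xp]; apply: (M_subB _ (lmM p pl)).
  by rewrite !inE.
have [|s [Us Ss Cs Ms]] := complete_cycle memB flatB Ul _ leAB n_gt0.
  by rewrite size_lm.
exists s; split=> //; first by apply: sub_cycle Cs => x y /orP[-> // | /lmM ->]; rewrite orbT.
by move=> e /Mlm[p pl ->]; exists p.1, p.2; split=> //; apply: Ms.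
Qed.

Local Open Scope ring_scope.

Lemma ltn_add_of_real (R : numDomainType) (m d1 d2 : nat) (x1 x2 : R) :
  m%:R < x1 + x2 -> x1 <= d1%:R -> x2 <= d2%:R -> (m < d1 + d2)%N.
Proof.
by move=> lt le1 le2; rewrite -(ltr_nat R) natrD (lt_le_trans lt) ?lerD.
Qed.

Lemma ler_deg_sub (R : numDomainType) n (H H' : rel 'I_n) v (X : {set 'I_n}) (x : R) :
  subrel H H' -> x <= (deg H v X)%:R -> x <= (deg H' v X)%:R.
Proof. by move=> sub /le_trans; apply; rewrite ler_nat deg_mono. Qed.

Section Superextremal.

Variables (R : archiRealFieldType) (n : nat) (G : rel 'I_n).
Variables (A B : {set 'I_n}) (M : {set {set 'I_n}}) (eta nu alpha : R).
Hypotheses (n_gt2 : (2 < n)%N) (Gsym : symmetric G).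
Hypotheses (eta_small : eta <= 16^-1) (nu_gt0 : 0 < nu) (nu_small : nu <= 16^-1).
Hypothesis alpha_small : alpha <= nu / 8.
Hypothesis supex : superextremal G A B alpha eta nu.
Hypothesis Mmatch : matching_in G B M.
Hypothesis cardM : #|M| = (#|B| - #|A|)%N.

Let N : R := n%:R.

Lemma memB x : (x \in B) = (x \notin A).
Proof.
case: supex => [[AB0 ABT] _ _ _ _]; apply/idP/idP => [xB|xA].
  apply/negP => xA; have : x \in A :&: B by rewrite inE xA xB.
  by rewrite AB0 inE.
have : x \in A :|: B by rewrite ABT inE.
by rewrite inE (negbTE xA).
Qed.

Lemma M_subB e : e \in M -> {subset e <= B}.
Proof.
by case: Mmatch => + _ => /[apply] -[u [v [-> _ _ uB vB]]] x; rewrite !inE => /orP[] /eqP ->.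
Qed.

Definition core : rel 'I_n :=
  fun x y => G x y && ((x \in A) != (y \in A)) || ([set x; y] \in M).

Lemma core_sym : symmetric core.
Proof. by move=> x y; rewrite /core Gsym setUC eq_sym. Qed.

Lemma core_subG : subrel core G.
Proof.
move=> x y /orP[/andP[] //|/(proj1 Mmatch)[u [v [Ee uv Guv _ _]]]].
by case: (eq_set2 uv Ee) => -[-> ->] //; rewrite Gsym.
Qed.

Lemma core_no_edge_in_A : no_edge_in_A A core.
Proof.
move=> x y xA yA; rewrite /core xA yA andbF /=; apply/negP => /M_subB.
by move=> /(_ x); rewrite memB xA !inE eqxx => /(_ isT).
Qed.

Lemma deg_G_core v (X : {set 'I_n}) : {in X, forall u, (v \in A) != (u \in A)} ->
  (deg G v X <= deg core v X)%N.
Proof.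
move=> vX; apply/subset_leq_card/subsetP => u; rewrite !inE => /andP[uX Gvu].
by rewrite uX /core Gvu vX.
Qed.

Lemma card_large_deg (X Y : {set 'I_n}) (c : R) :
  #|[set x in X | (deg G x Y)%:R < c]|%:R <= alpha * N ->
  #|X|%:R - alpha * N <= #|[set x in X | c <= (deg G x Y)%:R]|%:R.
Proof.
rewrite -(cardsID [set x | c <= (deg G x Y)%:R] X) natrD.
have -> : X :&: [set x | c <= (deg G x Y)%:R] = [set x in X | c <= (deg G x Y)%:R].
  by apply/setP => x; rewrite !inE.
have -> : X :\: [set x | c <= (deg G x Y)%:R] = [set x in X | (deg G x Y)%:R < c].
  by apply/setP => x; rewrite !inE ltNge andbC.
lra.
Qed.

Let TA := [set a in A | (2^-1 - eta) * N <= (deg G a B)%:R].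
Let TB := [set b in B | (2^-1 - eta) * N <= (deg G b A)%:R].

Lemma TA_subA : TA \subset A.
Proof. by apply/subsetP => a; rewrite inE => /andP[]. Qed.

Lemma TB_subB : TB \subset B.
Proof. by apply/subsetP => b; rewrite inE => /andP[]. Qed.

Lemma card_TA : #|A|%:R - alpha * N <= #|TA|%:R.
Proof. by case: supex => _ _ [lowA _] _ _; apply: card_large_deg. Qed.

Lemma card_TB : #|B|%:R - alpha * N <= #|TB|%:R.
Proof. by case: supex => _ _ _ [lowB _] _; apply: card_large_deg. Qed.

Lemma deg_core_AB a : a \in A -> (deg G a B <= deg core a B)%N.
Proof. by move=> aA; apply: deg_G_core => u; rewrite aA memB => /negbTE ->. Qed.

Lemma deg_core_BA b : b \in B -> (deg G b A <= deg core b A)%N.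
Proof. by rewrite memB => /negbTE bA; apply: deg_G_core => u ->; rewrite bA. Qed.

Lemma deg_core_TA a : a \in TA -> (2^-1 - eta) * N <= (deg core a B)%:R.
Proof.
by rewrite inE => /andP[aA le]; rewrite (le_trans le) // ler_nat deg_core_AB.
Qed.

Lemma deg_core_TB b : b \in TB -> (2^-1 - eta) * N <= (deg core b A)%:R.
Proof.
by rewrite inE => /andP[bB le]; rewrite (le_trans le) // ler_nat deg_core_BA.
Qed.

Lemma deg_core_A a : a \in A -> nu * N <= (deg core a B)%:R.
Proof.
case: supex => _ _ [_ degA] _ _ aA.
by rewrite (le_trans (degA a aA)) // ler_nat deg_core_AB.
Qed.

Lemma deg_core_B b : b \in B -> (4^-1 - eta) * N <= (deg core b A)%:R.
Proof.
case: supex => _ _ _ [_ degB] _ bB.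
by rewrite (le_trans (degB b bB)) // ler_nat deg_core_BA.
Qed.

Lemma N_gt0 : 0 < N.
Proof. by rewrite ltr0n; apply: ltn_trans n_gt2. Qed.

Lemma cardAB_real : #|A|%:R + #|B|%:R = N.
Proof. by rewrite -natrD (cardAB memB). Qed.

Lemma gapAB_real : #|B|%:R - #|A|%:R <= alpha * N.
Proof. by case: supex => _ [leAB gap] _ _ _; rewrite -natrB. Qed.

Lemma etaN_small : eta * N <= 16^-1 * N.
Proof. by rewrite ler_pM2r ?N_gt0. Qed.

Lemma nuN_small : nu * N <= 16^-1 * N.
Proof. by rewrite ler_pM2r ?N_gt0. Qed.

Lemma nuN_gt0 : 0 < nu * N.
Proof. by rewrite mulr_gt0 ?N_gt0. Qed.

Lemma alphaN_small : alpha * N <= nu / 8 * N.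
Proof. by rewrite ler_pM2r ?N_gt0. Qed.

Let H1 := add_biclique core TA TB.
Let H2 := add_biclique H1 A TB.
Let H3 := add_biclique H2 TA B.

Lemma ham_through_closure : ham_through M (add_biclique H3 A B).
Proof.
have M2 e : e \in M -> exists u v, e = [set u; v] /\ u != v.
  by move=> /(proj1 Mmatch)[u [v [? ? _ _ _]]]; exists u, v.
have [_ [leAB _] _ _ _] := supex.
have n_gt0 : (0 < n)%N by apply: ltn_trans n_gt2.
apply: ham_through_sub (ham_through_complete memB M_subB M2 (proj2 Mmatch) n_gt0 leAB cardM).
move=> x y /orP[xy|xyM].
  by rewrite add_bicliqueE !memB; case: (x \in A) (y \in A) xy => -[] //=; rewrite orbT.
by do 4!apply: add_biclique_sub; rewrite /core xyM orbT.
Qed.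

Lemma ham_through_core : ham_through M core.
Proof.
have step H SA SB := @ham_through_add_biclique n A B M memB M_subB H SA SB n_gt2.
move: N_gt0 cardAB_real gapAB_real card_TA card_TB => N0 sumAB gap cTA cTB.
move: etaN_small nuN_small nuN_gt0 alphaN_small => etaN nuN nuN0 alphaN.
have sym1 : symmetric H1 := add_biclique_sym _ _ core_sym.
have sym2 : symmetric H2 := add_biclique_sym _ _ sym1.
have sym3 : symmetric H3 := add_biclique_sym _ _ sym2.
have noAA1 : no_edge_in_A A H1 := no_edge_in_A_add_biclique memB _ core_no_edge_in_A TB_subB.
have noAA2 : no_edge_in_A A H2 := no_edge_in_A_add_biclique memB _ noAA1 TB_subB.
have noAA3 : no_edge_in_A A H3 := no_edge_in_A_add_biclique memB _ noAA2 (subxx _).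
have sub1 : subrel core H1 by apply: add_biclique_sub.
have sub2 : subrel H1 H2 by apply: add_biclique_sub.
apply: (step _ _ _ core_sym core_no_edge_in_A TA_subA TB_subB) => [a b aT bT|].
  by apply: (ltn_add_of_real _ (deg_core_TA aT) (deg_core_TB bT)); lra.
apply: (step _ _ _ sym1 noAA1 (subxx A) TB_subB) => [a b aA bT|].
  apply: (ltn_add_of_real _ (ler_deg_sub sub1 (deg_core_A aA))
    (_ : #|TA|%:R <= _ :> R)); first by lra.
  by rewrite ler_nat deg_add_bicliquer // TA_subA.
apply: (step _ _ _ sym2 noAA2 TA_subA (subxx B)) => [a b aT bB|].
  apply: (ltn_add_of_real _ (_ : #|TB|%:R <= _ :> R)
    (ler_deg_sub sub2 (ler_deg_sub sub1 (deg_core_B bB)))); first by lra.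
  by rewrite ler_nat (leq_trans (deg_add_bicliquel core aT TB_subB)) // deg_mono.
apply: (step _ _ _ sym3 noAA3 (subxx A) (subxx B) _ ham_through_closure) => a b aA bB.
apply: (ltn_add_of_real _ (_ : #|TB|%:R <= _ :> R) (_ : #|TA|%:R <= _ :> R)).
- by lra.
- rewrite ler_nat (leq_trans (deg_add_bicliquel H1 aA TB_subB)) // deg_mono //.
  exact: add_biclique_sub.
- by rewrite ler_nat deg_add_bicliquer // TA_subA.
Qed.

Lemma superextremal_hamilton :
  exists c, hamilton_cycle G c /\ forall e, e \in M -> edge_of_cycle c e.
Proof.
have [s [Us Ss Cs Ms]] := ham_through_core.
exists s; split; first by split; rewrite ?(sub_cycle core_subG Cs).
move=> e /Ms[x [y [Ee hxy]]]; exists x, y.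
by split=> //; split; [apply: consec_mem hxy | apply: consec_next].
Qed.

End Superextremal.

Theorem mainTheorem13 (R : archiRealFieldType) :
  exists eta0 : R, 0 < eta0 /\
  forall eta : R, 0 < eta -> eta <= eta0 ->
  exists nu0 : R, 0 < nu0 /\
  forall nu : R, 0 < nu -> nu <= nu0 ->
  exists alpha0 : R, 0 < alpha0 /\
  forall alpha : R, 0 < alpha -> alpha <= alpha0 ->
  exists n0 : nat, forall n : nat, (n0 <= n)%N ->
  forall (G : rel 'I_n), symmetric G -> irreflexive G ->
  forall (A B : {set 'I_n}) (M : {set {set 'I_n}}),
    superextremal G A B alpha eta nu ->
    matching_in G B M ->
    #|M| = (#|B| - #|A|)%N ->
    exists c : seq 'I_n, hamilton_cycle G c /\
      (forall e, e \in M -> edge_of_cycle c e).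
Proof.
have inv16_gt0 : 0 < 16^-1 :> R by rewrite invr_gt0.
exists 16^-1; split=> // eta _ eta_small.
exists 16^-1; split=> // nu nu_gt0 nu_small.
exists (nu / 8); split=> [|alpha _ alpha_small]; first by rewrite divr_gt0.
exists 3%N => n n_gt2 G Gsym _ A B M supex Mmatch cardM.
exact: (superextremal_hamilton n_gt2 Gsym eta_small nu_gt0 nu_small alpha_small
          supex Mmatch cardM).
Qed.
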